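(* Let $n$ be a positive integer, $p$ a prime number, $I$ an infinite set, and $R=\prod_{i\in I}\mathbb Z/np^2\mathbb Z$. There exists a $3\times3$ matrix with entries in $R$ that is partition regular over $R$ but does not satisfy the generalised columns condition.
   Context: A $k\times l$ matrix $\mathbf A$ over $R$ is partition regular over $R$ if for every $r\ge1$ and every map $\chi\colon R\to\{1,\dots,r\}$ there is a nonzero $\mathbf x\in R^l$ with $\mathbf A\mathbf x=0$ and all entries of $\mathbf x$ of the same colour. With columns $\mathbf c_1,\dots,\mathbf c_l$, $\mathbf A$ satisfies the generalised columns condition if there exist $m\ge0$, a partition $\{1,\dots,l\}=I_0\cup\dots\cup I_m$ and $d_0,\dots,d_m\in R\setminus\{0\}$ with (i) $d_0\sum_{i\in I_0}\mathbf c_i=0$; (ii) for $1\le t\le m$, $d_t\sum_{i\in I_t}\mathbf c_i$ lies in the $R$-submodule generated by the $\mathbf c_j$ with $j\in I_0\cup\dots\cup I_{t-1}$; (iii) if $m>0$, the ideal $d_0(d_1\cdots d_m)^nR$ is infinite for every $n\ge0$. *)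

From HB Require Import structures.
From mathcomp Require Import all_boot all_order all_algebra.
From mathcomp Require Import boolp classical_sets functions cardinality.
Set Implicit Arguments. Unset Strict Implicit. Unset Printing Implicit Defensive.
Import Order.TTheory GRing.Theory.
Local Open Scope ring_scope.
Local Open Scope classical_set_scope.

Definition partition_regular (R : comPzRingType) (k l : nat) (A : 'M[R]_(k, l)) :=
  forall (r : nat), (0 < r)%N -> forall chi : R -> 'I_r,
    exists x : 'cV[R]_l, [/\ x != 0, A *m x = 0 &
      exists c : 'I_r, forall i : 'I_l, chi (x i ord0) = c].

(* The partition {1..l} = I_0 u ... u I_m is
   encoded by f : 'I_l -> 'I_m.+1 (I_t = f^-1(t)); the parts are nonempty
   (f surjective).  The R-submodule generated by columns c_j is written out
   as the set of R-linear combinations of those columns. *)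
Definition gen_columns_condition (R : comPzRingType) (k l : nat) (A : 'M[R]_(k, l)) :=
  exists (m : nat) (f : 'I_l -> 'I_m.+1) (d : 'I_m.+1 -> R),
    [/\ forall t : 'I_m.+1, exists i : 'I_l, f i = t,
        forall t : 'I_m.+1, d t != 0,
        d ord0 *: (\sum_(i | f i == ord0) col i A) = 0,
        forall t : 'I_m.+1, (0 < t)%N ->
          exists a : 'I_l -> R,
            d t *: (\sum_(i | f i == t) col i A) =
              \sum_(j | (f j < t)%N) a j *: col j A
      & (0 < m)%N -> forall n : nat,
          infinite_set (range (fun r : R =>
             d ord0 * (\prod_(t : 'I_m.+1 | (0 < t)%N) d t) ^+ n * r))].

Definition prodZ (I : Type) (m : nat) := I -> 'Z_m.
HB.instance Definition _ (I : Type) (m : nat) := GRing.ComPzRing.on (prodZ I m).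

From mathcomp Require Import all_boot all_order all_algebra.
From mathcomp Require Import boolp classical_sets functions cardinality.
From mathcomp Require Import zify ring.
Set Implicit Arguments. Unset Strict Implicit. Unset Printing Implicit Defensive.
Import GRing.Theory.
Local Open Scope classical_set_scope.

(* Take A = [[1,-1,1],[0,p,0],[0,0,p]].

   Partition regularity: the elements u_a of R that are np at the a-th point of
   an injective sequence in I and 0 elsewhere are pairwise distinct and killed
   by p, so x = (u_a - u_b, u_a - u_c, u_b - u_c) solves A x = 0 for all
   a < b < c, and Ramsey's theorem for triangles makes one such x monochromatic.

   Columns condition: B A = p I for B = [[p,1,-1],[0,1,0],[0,0,1]].  Applying
   the row of B indexed by a column of the block I_t to condition (ii) gives
   d_t p = 0 for every t.  Elements of Z/np^2 killed by p are multiples of np,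
   so any two of them multiply to 0; hence d_0 d_1 = 0 and the ideal in (iii)
   is zero.  The case m = 0 is excluded because the column sum of A has first
   entry 1. *)

Fixpoint ramsey_bound (r : nat) : nat :=
  if r is r'.+1 then r * ramsey_bound r' + 1 else 2.

Lemma ramsey_bound_gt0 r : (0 < ramsey_bound r)%N.
Proof. by case: r => //= r; rewrite addn1. Qed.

Lemma pigeonhole_count (T U : eqType) (h : T -> U) (K : nat) (C : seq U) (s : seq T) :
  {in s, forall w, h w \in C} -> (size C * K < size s)%N ->
  exists2 c, c \in C & (K < count (fun w => h w == c) s)%N.
Proof.
elim: C s => [|c C IHC] s hC ltKs; first by case: s hC ltKs => // w s /(_ w (mem_head _ _)).
have [ltKc|lecK] := ltnP K (count (fun w => h w == c) s); first by exists c; rewrite ?mem_head.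
pose s' := filter (predC (fun w => h w == c)) s.
have hC' : {in s', forall w, h w \in C}.
  by move=> w; rewrite mem_filter /= => /andP[hwNc /hC]; rewrite in_cons (negbTE hwNc).
have ltKs' : (size C * K < size s')%N.
  have := count_predC (fun w => h w == c) s; rewrite size_filter.
  by move: ltKs lecK => /=; rewrite mulSn; lia.
have [c' c'C ltKc'] := IHC s' hC' ltKs'.
exists c'; first by rewrite in_cons c'C orbT.
by rewrite (leq_trans ltKc') // count_filter; apply: sub_count => w /andP[].
Qed.

Lemma monochromatic_triangle (T : eqType) (col : nat -> nat -> T) (r : nat)
    (C : seq T) (s : seq nat) : (size C <= r)%N -> sorted ltn s ->
  (ramsey_bound r <= size s)%N -> {in s &, forall a b, (a < b)%N -> col a b \in C} ->
  exists a b c, [/\ (a < b)%N, (b < c)%N, col a b = col a c & col a c = col b c].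
Proof.
elim: r C s => [|r IHr] C s.
  rewrite leqn0 => /nilP -> + + /(_ (nth 0 s 0) (nth 0 s 1)).
  case: s => [|a [|b s]] //= /andP[ltab _] _.
  by rewrite !in_cons !eqxx orbT => /(_ isT isT ltab).
move=> sizeC; case: s => [|v s] /= sorted_vs size_vs colC; first by rewrite addn1 in size_vs.
have lt_vs : all (ltn v) s := order_path_min ltn_trans sorted_vs.
have colvC : {in s, forall w, col v w \in C}.
  by move=> w ws; rewrite colC ?mem_head ?in_cons ?ws ?orbT //; apply: (allP lt_vs).
have size_s : (size C * (ramsey_bound r).-1 < size s)%N.
  by have := ramsey_bound_gt0 r; move: size_vs sizeC; nia.
have [c cC many_c] := pigeonhole_count colvC size_s.
pose s' := filter (fun w => col v w == c) s.
have s'P w : w \in s' -> (w \in s) && (col v w == c) by rewrite mem_filter andbC.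
(* Either colour c occurs inside s', closing a triangle with v, or s' avoids c. *)
have [[a [b [as' bs' ltab colab]]]|no_c] :=
  pselect (exists a b, [/\ a \in s', b \in s', (a < b)%N & col a b = c]).
  move: (s'P a as') (s'P b bs') => /andP[a_s /eqP cva] /andP[b_s /eqP cvb].
  exists v, a, b; split; [exact: (allP lt_vs) | exact: ltab | congruence | congruence].
apply: (IHr (filter (predC (pred1 c)) C) s').
- have c_count : (0 < count (pred1 c) C)%N.
    by rewrite -has_count; apply/hasP; exists c; rewrite /= ?eqxx.
  have := count_predC (pred1 c) C; rewrite size_filter; move: sizeC c_count => /=; lia.
- exact/sorted_filter/(path_sorted sorted_vs)/ltn_trans.
- by rewrite /s' size_filter -(prednK (ramsey_bound_gt0 r)).
- move=> a b as' bs' ltab; rewrite mem_filter /=.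
  move: (s'P a as') (s'P b bs') => /andP[a_s _] /andP[b_s _].
  rewrite colC ?in_cons ?a_s ?b_s ?orbT // andbT.
  by apply/eqP => colab; apply: no_c; exists a, b.
Qed.

Local Open Scope ring_scope.

Lemma infinite_set_injection (T : Type) :
  infinite_set [set: T] -> exists g : nat -> T, injective g.
Proof.
elim/Ppointed: T => T; first by rewrite emptyE; case; exact: finite_set0.
by move=> /infiniteP/pcard_injP[g gI]; exists g => a b; apply: gI; rewrite in_setT.
Qed.

Lemma fct_ann_injective_seq (I : Type) (K : pzRingType) (k : nat) (e : K) :
  infinite_set [set: I] -> e != 0 -> k%:R * e = 0 ->
  exists u : nat -> I -> K, injective u /\ forall a, k%:R * u a = 0.
Proof.
move=> /infinite_set_injection[g g_inj] e_neq0 ke.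
exists (fun a i => if `[< i = g a >] then e else 0); split.
  move=> a b /(congr1 (fun u => u (g a))) /=.
  rewrite asboolT //; case: asboolP => [/g_inj //|_ /eqP].
  by rewrite (negbTE e_neq0).
move=> a; apply/funext => i /=; rewrite mulrfctE natmulfctE /=.
by case: asboolP; rewrite ?mulr0.
Qed.

Definition ann_sqr_eq0 (R : pzRingType) (c : R) :=
  forall x y : R, x * c = 0 -> y * c = 0 -> x * y = 0.

Lemma Zp_nat_eq0 (N a : nat) : (1 < N)%N -> ((a%:R : 'Z_N) == 0) = (N %| a)%N.
Proof. by move=> N_gt1; rewrite -val_eqE /= val_Zp_nat. Qed.

Lemma Zp_ann_sqr_eq0 (N m k : nat) : (1 < N)%N -> (m * k = N)%N -> (k %| m)%N ->
  ann_sqr_eq0 (k%:R : 'Z_N).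
Proof.
move=> N_gt1 mkN km x y; rewrite -[x]natr_Zp -[y]natr_Zp -!natrM.
move: (x : nat) (y : nat) => {}x {}y /eqP xk /eqP yk; apply/eqP.
move: xk yk; rewrite !Zp_nat_eq0 // -mkN => xk yk.
have k_gt0 : (0 < k)%N by rewrite lt0n; apply: contraTneq N_gt1 => k0; rewrite -mkN k0 muln0.
have mk_dvd z : (m * k %| z * k)%N -> (m %| z)%N by rewrite dvdn_pmul2r.
by rewrite (dvdn_trans (dvdn_mul (dvdnn m) km)) // dvdn_mul ?mk_dvd.
Qed.

Lemma fct_ann_sqr_eq0 (I : Type) (K : pzRingType) (k : nat) :
  ann_sqr_eq0 (k%:R : K) -> ann_sqr_eq0 (k%:R : I -> K).
Proof.
move=> ann_sqr0 x y xk yk; apply/funext => i.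
by apply: ann_sqr0; [move: xk | move: yk] => /(congr1 (fun f => f i)); rewrite natmulfctE.
Qed.

Section ColumnsCondition.
Variables (R : comPzRingType) (k l : nat) (A : 'M[R]_(k, l)) (B : 'M[R]_(l, k)) (c : R).
Hypothesis BA : B *m A = c%:M.

Lemma mulmx_linv_sum_col (P : pred 'I_l) (w : 'I_l -> R) (i : 'I_l) :
  (B *m \sum_(j | P j) w j *: col j A) i 0 = if P i then w i * c else 0.
Proof.
transitivity (\sum_(j | P j) w j * (B *m A) i j).
  rewrite mulmx_sumr summxE; apply: eq_bigr => j _.
  by rewrite -scalemxAr !mxE; congr (_ * _); apply: eq_bigr => m _; rewrite !mxE.
rewrite BA big_mkcond (bigD1 i) //= big1 => [|j /negbTE ji]; rewrite mxE ?eqxx ?addr0.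
  by case: (P i); rewrite ?mulr1n.
by rewrite eq_sym ji mulr0n; case: (P j) => //; rewrite mulr0.
Qed.

Lemma gen_columns_block_annihilated m (f : 'I_l -> 'I_m.+1) (d : R) (a : 'I_l -> R) t :
  (exists i, f i = t) ->
  d *: \sum_(j | f j == t) col j A = \sum_(j | (f j < t)%N) a j *: col j A ->
  d * c = 0.
Proof.
move=> [i fi] /(congr1 (fun v => (B *m v) i 0)).
by rewrite scaler_sumr !mulmx_linv_sum_col fi eqxx ltnn.
Qed.

Lemma not_gen_columns_condition :
  (forall e : R, e *: \sum_j col j A = 0 -> e = 0) ->
  ann_sqr_eq0 c -> ~ gen_columns_condition A.
Proof.
move=> sum_col_faithful ann_c_sqr0 [m [f [d [f_surj d_neq0 d0_block dt_block inf_range]]]].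
have d_ann t : d t * c = 0.
  have [t0|t_gt0] := posnP t; last first.
    by have [a] := dt_block t t_gt0; apply: gen_columns_block_annihilated (f_surj t).
  have -> : t = ord0 by apply: val_inj.
  apply: (@gen_columns_block_annihilated _ f _ 0 _ (f_surj ord0)).
  by rewrite d0_block big1 // => j _; rewrite scale0r.
have [m0|m_gt0] := posnP m.
  subst m.
  have := d_neq0 ord0; rewrite (sum_col_faithful (d ord0)) ?eqxx // -[RHS]d0_block.
  by congr (_ *: _); apply: eq_bigl => j; rewrite (ord1 (f j)) eqxx.
pose t1 : 'I_m.+1 := Ordinal (m_gt0 : 1 < m.+1)%N.
apply: (inf_range m_gt0 1); apply: (sub_finite_set _ (finite_set1 0)) => _ [r _ <-] /=.
by rewrite expr1 (bigD1 t1) //= mulrA [d ord0 * d t1]ann_c_sqr0 ?d_ann // !mul0r.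
Qed.
End ColumnsCondition.

Definition triangle_mx (R : pzRingType) (c : R) : 'M[R]_3 :=
  \matrix_(i, j) nth 0 (nth [::] [:: [:: 1; -1; 1]; [:: 0; c; 0]; [:: 0; 0; c]] i) j.

Definition triangle_mx_linv (R : pzRingType) (c : R) : 'M[R]_3 :=
  \matrix_(i, j) nth 0 (nth [::] [:: [:: c; 1; -1]; [:: 0; 1; 0]; [:: 0; 0; 1]] i) j.

Lemma mul_triangle_mx_linv (R : pzRingType) (c : R) :
  triangle_mx_linv c *m triangle_mx c = c%:M.
Proof.
apply/matrixP => -[[|[|[|i]]] ?] -[[|[|[|j]]] ?] //;
  rewrite !mxE !big_ord_recl big_ord0 !mxE /=;
  by rewrite ?(mulr1, mulrN1, mulN1r, mul1r, mul0r, mulr0, addr0, add0r, addNr, addrN, oppr0, subr0, mulr0n, mulr1n).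
Qed.

Lemma triangle_mx_sum_col_scale_eq0 (R : pzRingType) (c e : R) :
  e *: \sum_j col j (triangle_mx c) = 0 -> e = 0.
Proof.
move=> /matrixP/(_ 0 0); rewrite !mxE summxE !big_ord_recl big_ord0 !mxE /=.
by rewrite addr0 addNr addr0 mulr1.
Qed.

Lemma triangle_mx_partition_regular (R : comPzRingType) (c : R) (u : nat -> R) :
  injective u -> (forall a, c * u a = 0) -> partition_regular (triangle_mx c).
Proof.
move=> u_inj cu r _ chi.
pose colour a b := chi (u a - u b).
have [a [b [d [lt_ab lt_bd col_ab col_ad]]]] : exists a b d,
    [/\ (a < b)%N, (b < d)%N, colour a b = colour a d & colour a d = colour b d].
  apply: (@monochromatic_triangle _ colour r (enum 'I_r) (iota 0 (ramsey_bound r))).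
  - by rewrite size_enum_ord.
  - exact: iota_ltn_sorted.
  - by rewrite size_iota.
  - by move=> *; rewrite mem_enum.
exists (\col_i nth 0 [:: u a - u b; u a - u d; u b - u d] i); split.
- apply/eqP => /matrixP/(_ 0 0); rewrite !mxE /= => /eqP; rewrite subr_eq0 => /eqP/u_inj ab.
  by rewrite ab ltnn in lt_ab.
- apply/matrixP => -[[|[|[|i]]] ?] j //; rewrite !mxE !big_ord_recl big_ord0 !mxE /=.
  + by ring.
  + by rewrite !mul0r mulrBr !cu subrr !add0r.
  + by rewrite !mul0r mulrBr !cu subrr !add0r.
- by exists (colour a b) => -[[|[|[|i]]] ?]; rewrite mxE //= col_ab col_ad.
Qed.

Theorem corollary4p7 (n p : nat) (I : Type) :
  (0 < n)%N -> prime p -> infinite_set [set: I] ->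
  exists A : 'M[prodZ I (n * p ^ 2)]_(3, 3),
    partition_regular A /\ ~ gen_columns_condition A.
Proof.
move=> n_gt0 p_prime infI; have p_gt1 := prime_gt1 p_prime.
have npN : (n * p * p = n * p ^ 2)%N by rewrite -mulnA mulnn.
have N_gt1 : (1 < n * p ^ 2)%N by rewrite -npN; nia.
exists (triangle_mx (p%:R : prodZ I (n * p ^ 2))); split.
- have np_neq0 : (n * p)%:R != 0 :> 'Z_(n * p ^ 2).
    have np_gt0 : (0 < n * p)%N by rewrite muln_gt0 n_gt0 ltnW.
    by rewrite Zp_nat_eq0 // -npN -{2}[(n * p)%N]muln1 dvdn_pmul2l // dvdn1 neq_ltn p_gt1 orbT.
  have p_np : p%:R * (n * p)%:R = 0 :> 'Z_(n * p ^ 2).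
    by rewrite -natrM [(p * _)%N]mulnC npN pchar_Zp.
  have [u [u_inj pu]] := fct_ann_injective_seq infI np_neq0 p_np.
  exact: triangle_mx_partition_regular u_inj pu.
apply: (not_gen_columns_condition (mul_triangle_mx_linv _)).
  exact: triangle_mx_sum_col_scale_eq0.
exact/fct_ann_sqr_eq0/(Zp_ann_sqr_eq0 N_gt1 npN)/dvdn_mull.
Qed.
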